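(* Let $A \in \mathbb{R}^{m \times n}$, let $Q \subset \mathbb{R}^m$ be closed and convex such that the collection $\{Q,\mathcal{R}(A)\}$ is boundedly linearly regular, and let $C=\{x \in \mathbb{R}^n : Ax \in Q\}$. Then for every $R>0$ there exists $\gamma>0$ such that for all $x \in \mathbb{R}^n$ with $\|x\|_2\le R$, \[ \operatorname{dist}(x,C) \le \gamma \cdot \operatorname{dist}(Ax, Q). \]
   Context: $\mathcal{R}(A)$ denotes the range of $A$; $\operatorname{dist}$ denotes Euclidean distance to a set. A collection of closed convex sets $C_1,\dots,C_r\subset\mathbb{R}^m$ with nonempty intersection $D=\bigcap_i C_i$ is boundedly linearly regular if for every $R>0$ there is $\gamma>0$ such that $\operatorname{dist}(y,D)^2\le\gamma\sum_{i=1}^r\operatorname{dist}(y,C_i)^2$ for all $y$ with $\|y\|_2\le R$. (In particular bounded linear regularity of $\{Q,\mathcal{R}(A)\}$ includes $Q\cap\mathcal{R}(A)\neq\emptyset$.) *)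

From HB Require Import structures.
From mathcomp Require Import all_boot all_order all_algebra.
From mathcomp Require Import all_classical all_reals all_analysis.
Set Implicit Arguments. Unset Strict Implicit. Unset Printing Implicit Defensive.
Import Order.TTheory GRing.Theory Num.Theory.
Local Open Scope ring_scope.
Local Open Scope classical_set_scope.

Section Defs.
Variable R : realType.

Definition eucl_norm k (x : 'cV[R]_k) : R := Num.sqrt (\sum_(i < k) x i 0 ^+ 2).

Definition eucl_dist k (x : 'cV[R]_k) (S : set 'cV[R]_k) : R :=
  inf [set eucl_norm (x - y) | y in S].

Definition mxrange m n (A : 'M[R]_(m, n)) : set 'cV[R]_m :=
  [set A *m x | x in [set: 'cV[R]_n]].

Definition boundedly_linearly_regular k (Cs : seq (set 'cV[R]_k)) : Prop :=
  let D := \big[setI/setT]_(C <- Cs) C in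
  D !=set0 /\
  forall rad : R, 0 < rad -> exists gamma : R, 0 < gamma /\
    forall y : 'cV[R]_k, eucl_norm y <= rad ->
      eucl_dist y D ^+ 2 <= gamma * \sum_(C <- Cs) eucl_dist y C ^+ 2.
End Defs.

From HB Require Import structures.
From mathcomp Require Import all_boot all_order all_algebra.
From mathcomp Require Import all_classical all_reals all_analysis.
Set Implicit Arguments. Unset Strict Implicit. Unset Printing Implicit Defensive.
Import Order.TTheory GRing.Theory Num.Theory.
Local Open Scope ring_scope.
Local Open Scope classical_set_scope.

(** Bounded linear regularity, applied at a point [A x] of the range, gives
    [dist(A x, Q ∩ R(A)) <= k dist(A x, Q)].  A linear right inverse of [A] on
    its range lifts the step from [A x] to a nearest point of [Q ∩ R(A)] to a
    step of proportional length from [x] into [C], so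
    [dist(x, C) <= M dist(A x, Q ∩ R(A))]. *)

Section EuclideanNorm.
Variable R : realType.

Lemma eucl_norm_ge0 k (x : 'cV[R]_k) : 0 <= eucl_norm x.
Proof. exact: sqrtr_ge0. Qed.

Lemma eucl_normN k (x : 'cV[R]_k) : eucl_norm (- x) = eucl_norm x.
Proof.
by rewrite /eucl_norm; congr Num.sqrt; apply: eq_bigr => i _; rewrite mxE sqrrN.
Qed.

Lemma eucl_norm0 k : eucl_norm (0 : 'cV[R]_k) = 0.
Proof. by rewrite /eucl_norm big1 ?sqrtr0 // => i _; rewrite mxE expr0n. Qed.

Lemma ler_sqr_norm (a b : R) : 0 <= b -> a ^+ 2 <= b ^+ 2 -> `|a| <= b.
Proof.
move=> b_ge0 le_ab; rewrite -sqrtr_sqr -[b]ger0_norm // -sqrtr_sqr.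
exact: ler_wsqrtr.
Qed.

Lemma coord_le_eucl_norm k (x : 'cV[R]_k) j : `|x j 0| <= eucl_norm x.
Proof.
apply: ler_sqr_norm; first exact: eucl_norm_ge0.
rewrite sqr_sqrtr; last by apply: sumr_ge0 => i _; rewrite sqr_ge0.
by rewrite (bigD1 j) //= lerDl; apply: sumr_ge0 => i _; rewrite sqr_ge0.
Qed.

Lemma eucl_norm_mulmx_le p q (B : 'M[R]_(p, q)) :
  exists2 M, 0 < M & forall x, eucl_norm (B *m x) <= M * eucl_norm x.
Proof.
pose c i := \sum_(j < q) `|B i j|.
have c_ge0 i : 0 <= c i by apply: sumr_ge0.
pose K := \sum_(i < p) c i ^+ 2.
have K_ge0 : 0 <= K by apply: sumr_ge0 => i _; rewrite sqr_ge0.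
exists (Num.sqrt K + 1) => [|x]; first by rewrite ltr_wpDl ?sqrtr_ge0.
apply: (@le_trans _ _ (Num.sqrt K * eucl_norm x)); last first.
  by rewrite ler_wpM2r ?eucl_norm_ge0 ?lerDl.
rewrite /eucl_norm -sqrtrM //; apply: ler_wsqrtr.
rewrite mulr_suml; apply: ler_sum => i _.
have le_Bx : `|(B *m x) i 0| <= c i * eucl_norm x.
  rewrite mxE /c mulr_suml; apply: le_trans (ler_norm_sum _ _ _) _.
  apply: ler_sum => j _; rewrite normrM.
  exact: ler_wpM2l (coord_le_eucl_norm _ _).
have := lerXn2r 2 (normr_ge0 _) (mulr_ge0 (c_ge0 i) (eucl_norm_ge0 x)) le_Bx.
rewrite real_normK ?num_real // exprMn sqr_sqrtr //.
by apply: sumr_ge0 => l _; rewrite sqr_ge0.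
Qed.

End EuclideanNorm.

Section EuclideanDistance.
Variables (R : realType) (k : nat).
Implicit Types (S : set 'cV[R]_k) (x y : 'cV[R]_k).

Lemma eucl_dist_le S x y : S y -> eucl_dist x S <= eucl_norm (x - y).
Proof.
move=> Sy; apply: ge_inf; last by exists y.
by exists 0 => _ [z _ <-]; exact: eucl_norm_ge0.
Qed.

Lemma eucl_dist_ge S x c : S !=set0 ->
  (forall y, S y -> c <= eucl_norm (x - y)) -> c <= eucl_dist x S.
Proof.
move=> [y Sy] le_c; apply: lb_le_inf; first by exists (eucl_norm (x - y)), y.
by move=> _ [z Sz <-]; exact: le_c.
Qed.

Lemma eucl_dist_ge0 S x : S !=set0 -> 0 <= eucl_dist x S.
Proof. by move=> S_neq0; apply: eucl_dist_ge => // y _; exact: eucl_norm_ge0. Qed.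

Lemma eucl_dist_mem S x : S x -> eucl_dist x S = 0.
Proof.
move=> Sx; apply/le_anti; rewrite eucl_dist_ge0 ?andbT; last by exists x.
by have := eucl_dist_le x Sx; rewrite subrr eucl_norm0.
Qed.

Lemma blr2_eucl_dist_le (Q S : set 'cV[R]_k) :
  boundedly_linearly_regular [:: Q; S] ->
  forall rad, 0 < rad -> exists2 kappa, 0 < kappa &
    forall y, eucl_norm y <= rad -> S y ->
      eucl_dist y (Q `&` S) <= kappa * eucl_dist y Q.
Proof.
rewrite /boundedly_linearly_regular /= !big_cons big_nil setIT.
move=> [QS_neq0 blr] rad rad_gt0; have [g [g_gt0 le_dist]] := blr _ rad_gt0.
exists (Num.sqrt g) => [|y y_le Sy]; first by rewrite sqrtr_gt0.
have := le_dist _ y_le; rewrite !big_cons big_nil (eucl_dist_mem Sy) expr0n /=.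
rewrite !addr0 => le_sqr.
have Q_neq0 : Q !=set0 by case: QS_neq0 => z [Qz _]; exists z.
rewrite -(ger0_norm (eucl_dist_ge0 y QS_neq0)).
apply: ler_sqr_norm; first by rewrite mulr_ge0 ?sqrtr_ge0 ?eucl_dist_ge0.
by rewrite exprMn sqr_sqrtr // ltW.
Qed.

End EuclideanDistance.

Section Preimage.
Variables (R : realType) (m n : nat) (A : 'M[R]_(m, n)).

(* A right inverse of [A] on its range: [pinvmx] inverts on row spaces, so it is
   applied to [A^T] and transposed back. *)
Definition range_pinvmx : 'M[R]_(n, m) := (pinvmx A^T)^T.

Lemma mulmx_range_pinvmx v : mxrange A v -> A *m (range_pinvmx *m v) = v.
Proof.
move=> [u _ <-]; have := congr1 trmx (mulmxKpV (submxMl u^T A^T)).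
by rewrite /range_pinvmx; set P := pinvmx _; rewrite !trmx_mul !trmxK mulmxA.
Qed.

Lemma eucl_dist_preimage_le (S : set 'cV[R]_m) :
  S `&` mxrange A !=set0 -> exists2 M, 0 < M & forall x,
    eucl_dist x [set x | S (A *m x)] <= M * eucl_dist (A *m x) (S `&` mxrange A).
Proof.
move=> SA_neq0; have [M M_gt0 le_norm] := eucl_norm_mulmx_le range_pinvmx.
exists M => // x; rewrite mulrC -ler_pdivrMr //.
apply: eucl_dist_ge => // y [Sy range_y]; rewrite ler_pdivrMr // mulrC.
pose w := range_pinvmx *m (y - A *m x).
have Aw : A *m w = y - A *m x.
  apply: mulmx_range_pinvmx; case: range_y => u _ <-.
  by exists (u - x); rewrite ?mulmxBr.
have Sxw : S (A *m (x + w)) by rewrite mulmxDr Aw addrC subrK.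
apply: le_trans (eucl_dist_le x Sxw) _.
rewrite opprD addrA subrr add0r eucl_normN -opprB eucl_normN.
exact: le_norm.
Qed.

End Preimage.

Theorem lemma3p7 (R : realType) (m n : nat) (A : 'M[R]_(m, n))
  (Q : set 'cV[R]_m) :
  closed (Q : set 'cV[R^o]_m) -> convex_set Q ->
  boundedly_linearly_regular [:: Q; mxrange A] ->
  let C := [set x : 'cV[R]_n | Q (A *m x)] in
  forall rad : R, 0 < rad -> exists gamma : R, 0 < gamma /\
    forall x : 'cV[R]_n, eucl_norm x <= rad ->
      eucl_dist x C <= gamma * eucl_dist (A *m x) Q.
Proof.
move=> _ _ blr C rad rad_gt0.
have QA_neq0 : Q `&` mxrange A !=set0.
  by case: blr; rewrite /= !big_cons big_nil setIT.
have [MA MA_gt0 le_Ax] := eucl_norm_mulmx_le A.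
have [kappa kappa_gt0 le_regular] :=
  blr2_eucl_dist_le blr (mulr_gt0 MA_gt0 rad_gt0).
have [M M_gt0 le_preimage] := eucl_dist_preimage_le QA_neq0.
exists (M * kappa); split=> [|x x_le]; first exact: mulr_gt0.
apply: le_trans (le_preimage x) _; rewrite -mulrA ler_pM2l //.
apply: le_regular; last by exists x.
apply: le_trans (le_Ax x) _.
by rewrite ler_pM2l.
Qed.
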